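(* For every finite graph $G$: $G$ is a blue-red interval graph if and only if $G$ is a linear leaf power.
   Context: A leaf root of a graph $G$ is a pair $(T,\mathsf{w})$ where $T$ is a tree and $\mathsf{w}:E(T)\to[0,1]$ is a rational-valued edge-weight function, such that the vertices of $G$ are exactly the leaves of $T$ and for all distinct $u,v\in V(G)$, $uv\in E(G)$ iff $d_T(u,v)\le 1$, where $d_T(x,y)$ is the sum of the weights of the edges on the unique path of $T$ between $x$ and $y$. A caterpillar is a tree having a path that contains all nodes of degree at least $2$. A graph is a linear leaf power if it admits a leaf root $(T,\mathsf{w})$ with $T$ a caterpillar. A graph $G$ is a blue-red interval graph if there exist a bipartition $(B,R)$ of $V(G)$ and closed intervals $I_v\subseteq\mathbb{Q}$, $v\in V(G)$, such that $E(G)=\{b_1b_2 : b_1,b_2\in B,\ b_1\neq b_2,\ I_{b_1}\cap I_{b_2}\neq\emptyset\}\cup\{rb : r\in R,\ b\in B,\ I_r\subseteq I_b\}$ (in particular $R$ is an independent set). *)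

From HB Require Import structures.
From mathcomp Require Import all_boot all_order all_algebra.
Set Implicit Arguments. Unset Strict Implicit. Unset Printing Implicit Defensive.
Import Order.TTheory GRing.Theory Num.Theory.
Local Open Scope ring_scope.

Definition simple_graph (V : finType) (e : rel V) : Prop :=
  symmetric e /\ irreflexive e.

Definition in_itv (V : Type) (lo hi : V -> rat) (v : V) (x : rat) : Prop :=
  lo v <= x <= hi v.

Definition blue_red_interval (V : finType) (e : rel V) : Prop :=
  exists (B : {set V}) (lo hi : V -> rat),
    (forall v, lo v <= hi v) /\
    forall u v : V,
      e u v <->
      ( (u \in B /\ v \in B /\ u != v /\
           exists x, in_itv lo hi u x /\ in_itv lo hi v x)
      \/ (u \notin B /\ v \in B /\
           forall x, in_itv lo hi u x -> in_itv lo hi v x)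
      \/ (u \in B /\ v \notin B /\
           forall x, in_itv lo hi v x -> in_itv lo hi u x) ).

Definition simple_path (N : finType) (t : rel N) (x : N) (p : seq N) (y : N) : bool :=
  path t x p && uniq (x :: p) && (last x p == y).

(* a tree: symmetric irreflexive relation with a unique simple path between
   any two nodes (the empty node type is allowed) *)
Definition is_tree (N : finType) (t : rel N) : Prop :=
  symmetric t /\ irreflexive t /\
  forall x y : N, exists! p : seq N, simple_path t x p y.

Definition degree (N : finType) (t : rel N) (x : N) : nat := #|[set y | t x y]|.

Definition is_leaf (N : finType) (t : rel N) (x : N) : bool := (degree t x <= 1)%N.

Definition is_caterpillar (N : finType) (t : rel N) : Prop :=
  is_tree t /\
  exists s : seq N,
    match s with [::] => true | x :: s' => path t x s' && uniq s end /\
    forall x, (2 <= degree t x)%N -> x \in s.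

Fixpoint path_weight (N : Type) (w : N -> N -> rat) (x : N) (p : seq N) : rat :=
  match p with
  | [::] => 0
  | y :: p' => w x y + path_weight w y p'
  end.

Definition tree_dist (N : finType) (t : rel N) (w : N -> N -> rat) (u v : N) (r : rat) : Prop :=
  exists p, simple_path t u p v /\ path_weight w u p = r.

Definition leaf_root (V : finType) (e : rel V) (N : finType) (t : rel N)
    (w : N -> N -> rat) (f : V -> N) : Prop :=
  is_tree t /\
  (forall x y, t x y -> 0 <= w x y <= 1 /\ w x y = w y x) /\
  injective f /\
  (forall x : N, is_leaf t x <-> exists v, f v = x) /\
  (forall u v : V, u != v ->
     (e u v <-> exists r, tree_dist t w (f u) (f v) r /\ r <= 1)).

Definition linear_leaf_power (V : finType) (e : rel V) : Prop :=
  exists (N : finType) (t : rel N) (w : N -> N -> rat) (f : V -> N),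
    is_caterpillar t /\ leaf_root e t w f.

(* Both classes consist of the graphs admitting weights A v in [0, 1] and
   positions Y v such that, for u <> v, uv is an edge iff
   A u + A v + |Y u - Y v| <= 1 ([caterpillar_model]).  In a caterpillar leaf
   root every leaf hangs on the spine by a pendant edge (of weight 0 if it lies
   on the spine), so the distance between two leaves is the sum of their
   pendant weights plus the distance of their attachment points along the
   spine; conversely, sorting the vertices by Y and hanging each v on its own
   spine node by an edge of weight A v builds such a caterpillar.  On the
   interval side v is blue iff A v <= 1/2, and its interval is centred at Y v
   with radius |A v - 1/2|; conversely, rescaled centres and radii of the
   intervals give Y and A, once blue and red radii are pushed apart by a
   fraction of the least positive gap between blue intervals, which keeps red
   vertices pairwise non-adjacent. *)

From HB Require Import structures.
From mathcomp Require Import all_boot all_order all_algebra.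
From mathcomp Require Import ring lra zify.
Set Implicit Arguments. Unset Strict Implicit. Unset Printing Implicit Defensive.
Import Order.TTheory GRing.Theory Num.Theory.

(** * Trees given by parent functions *)

Definition parent_rel (N : eqType) (par : N -> N) : rel N :=
  fun x y => (x != y) && ((par x == y) || (par y == x)).

Definition ancestor (N : Type) (par : N -> N) (a z : N) : Prop :=
  exists k, iter k par z = a.

Lemma parent_rel_sym (N : eqType) (par : N -> N) : symmetric (parent_rel par).
Proof. by move=> x y; rewrite /parent_rel eq_sym orbC. Qed.

Lemma parent_rel_irr (N : eqType) (par : N -> N) : irreflexive (parent_rel par).
Proof. by move=> x; rewrite /parent_rel eqxx. Qed.

Section ParentForest.

Variables (N : eqType) (par : N -> N) (h : N -> nat).
Hypothesis par_rank : forall z, par z = z \/ (h (par z) < h z)%N.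

Lemma rank_iter_le k z : (h (iter k par z) <= h z)%N.
Proof.
elim: k => [|k IH] //=; case: (par_rank (iter k par z)) => [-> // | lt].
exact: leq_trans (ltnW lt) IH.
Qed.

Lemma iter_par_neq k z : par z <> z -> iter k.+1 par z <> z.
Proof.
move=> nz E; have := rank_iter_le k (par z); rewrite -iterSr E.
case: (par_rank z) => [/nz // | ]; lia.
Qed.

Lemma ancestor_par a z : z <> a -> ancestor par a z <-> ancestor par a (par z).
Proof.
move=> za; split; last by move=> [k E]; exists k.+1; rewrite iterSr.
by move=> [[|k] E]; [case: za | exists k; rewrite -iterSr].
Qed.

Lemma ancestor_edge a u u' : parent_rel par u u' -> u <> par a -> u' <> par a ->
  ancestor par a u <-> ancestor par a u'.
Proof.
move=> /andP [_ /orP [/eqP <- | /eqP <-]] hu hu'.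
  by apply: ancestor_par => ua; apply: hu'; rewrite ua.
by symmetry; apply: ancestor_par => ua; apply: hu; rewrite ua.
Qed.

Lemma ancestor_walk a z q : path (parent_rel par) z q -> par a \notin z :: q ->
  ancestor par a z <-> ancestor par a (last z q).
Proof.
elim: q z => [|y q IH] z //= /andP [ezy pq].
rewrite in_cons negb_or => /andP [nz nq].
apply: iff_trans (IH y pq nq); apply: ancestor_edge ezy _ _ => E.
  by rewrite E eqxx in nz.
by rewrite in_cons E eqxx in nq.
Qed.

Lemma ancestor_siblings a b y : ancestor par a y -> ancestor par b y ->
  par a = par b -> par a <> a -> par b <> b -> a = b.
Proof.
suff W a' b' k m : iter k par y = a' -> iter m par y = b' -> (k <= m)%N ->
    par a' = par b' -> par b' <> b' -> a' = b'.
  move=> [k Ek] [m Em] pab na nb; case: (leqP k m) => km.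
    exact: W Ek Em km pab nb.
  by symmetry; apply: W Em Ek (ltnW km) (esym pab) na.
move=> Ek Em km pab nb; rewrite -(subnK km) iterD Ek in Em.
case: (m - k)%N Em => [//|d]; rewrite iterSr pab => Em.
have := rank_iter_le d (par b'); rewrite Em.
case: (par_rank b') => [/nb // | ]; lia.
Qed.

Lemma ancestor_self a : ancestor par a a.
Proof. by exists 0%N. Qed.

(* [b] is an ancestor of the common endpoint: if [a] is the parent of [x], then [b]
   is a proper ancestor of itself, otherwise [a] and [b] are sibling ancestors. *)
Lemma parent_walks_disjoint x a p b q :
  par b = x -> b != x -> a != b -> parent_rel par x a ->
  path (parent_rel par) a p -> path (parent_rel par) b q -> last a p = last b q ->
  x \notin a :: p -> x \notin b :: q -> False.
Proof.
move=> pb bx ab /andP [xa /orP [/eqP pxa | /eqP pax]] pp pq lpq xp xq.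
  have [k Ek] : ancestor par b a.
    apply/(ancestor_walk pp); rewrite ?pb ?lpq //.
    by apply/(ancestor_walk pq); rewrite ?pb //; exact: ancestor_self.
  apply: (iter_par_neq (k := k.+1) (z := b)); first by rewrite pb => E; rewrite E eqxx in bx.
  by rewrite !iterSr pb pxa.
have Ay : forall c r, par c = x -> path (parent_rel par) c r -> x \notin c :: r ->
    ancestor par c (last c r).
  by move=> c r <- pr xr; apply/(ancestor_walk pr xr); exact: ancestor_self.
move/eqP: ab; apply; apply: (ancestor_siblings (y := last b q)).
- by rewrite -lpq; apply: Ay.
- exact: Ay.
- by rewrite pax pb.
- by rewrite pax => E; rewrite E eqxx in xa.
- by rewrite pb => E; rewrite E eqxx in bx.
Qed.

End ParentForest.

Section ParentTree.

Variables (N : finType) (par : N -> N) (h : N -> nat).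
Hypothesis par_rank : forall z, par z = z \/ (h (par z) < h z)%N.

Lemma parent_simple_path_uniq x p q y :
  simple_path (parent_rel par) x p y -> simple_path (parent_rel par) x q y -> p = q.
Proof.
have nil_cons x' b q' : simple_path (parent_rel par) x' [::] y ->
    ~~ simple_path (parent_rel par) x' (b :: q') y.
  move=> /andP [_ /eqP /= <-]; apply/negP => /andP [/andP [_ /andP [+ _]] /eqP lq].
  by rewrite -lq /= mem_last.
elim: p x q => [|a p IH] x [|b q] // sp sq.
- by move: (nil_cons x b q sp); rewrite sq.
- by move: (nil_cons x a p sq); rewrite sp.
move: sp sq => /andP [/andP [/= /andP [xa pp] /andP [xp up]] /eqP lp].
move=> /andP [/andP [/= /andP [xb pq] /andP [xq uq]] /eqP lq].
case: (eqVneq a b) => [eab | ab].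
  subst b; congr (_ :: _); apply: (IH a).
    by rewrite /simple_path pp lp eqxx andbT.
  by rewrite /simple_path pq lq eqxx andbT.
have lpq : last a p = last b q by rewrite lp lq.
exfalso; move: (xa) (xb) => /andP [xa' /orP [/eqP pxa | /eqP pax]].
  move=> /andP [xb' /orP [/eqP pxb | /eqP pbx]].
    by rewrite -pxa -pxb eqxx in ab.
  by apply: (parent_walks_disjoint par_rank pbx _ ab xa pp pq lpq xp xq); rewrite eq_sym.
move=> _; rewrite eq_sym in ab.
by apply: (parent_walks_disjoint par_rank pax _ ab xb pq pp (esym lpq) xq xp); rewrite eq_sym.
Qed.

Lemma parent_tree r : (forall z, ancestor par r z) -> is_tree (parent_rel par).
Proof.
move=> root; split; first exact: parent_rel_sym.
split => [|x y]; first exact: parent_rel_irr.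
have up k z : connect (parent_rel par) z (iter k par z).
  elim: k => [|k IH]; first exact: connect0.
  apply: connect_trans IH _; rewrite iterS; set u := iter k par z.
  case: (eqVneq (par u) u) => [->|ne]; first exact: connect0.
  by apply: connect1; rewrite /parent_rel eq_sym ne eqxx.
have [[kx Ex] [ky Ey]] := (root x, root y).
have /connectP [p pp ->] : connect (parent_rel par) x y.
  apply: connect_trans (up kx x) _; rewrite Ex -Ey sym_connect_sym ?up //.
  exact: parent_rel_sym.
case: (shortenP pp) => p' pp' up' _.
have sp' : simple_path (parent_rel par) x p' (last x p') by rewrite /simple_path pp' up' eqxx.
by exists p'; split => // q; apply: parent_simple_path_uniq.
Qed.

End ParentTree.

Local Open Scope ring_scope.

(** * Path weights and distances in caterpillars *)

Lemma last_take_index (T : eqType) (x y : T) s :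
  y \in s -> last x (take (index y s).+1 s) = y.
Proof.
move=> ys; rewrite (last_nth x) size_takel ?index_mem //=.
by rewrite nth_take ?nth_index.
Qed.

Lemma last_rev_belast (T : Type) (x : T) p : last (last x p) (rev (belast x p)) = x.
Proof. by case: p => [|y p] //=; rewrite rev_cons last_rcons. Qed.

Section PathWeight.

Variables (N : Type) (w : N -> N -> rat).

Lemma path_weight_cat x p q :
  path_weight w x (p ++ q) = path_weight w x p + path_weight w (last x p) q.
Proof. by elim: p x => [|y p IH] x /=; rewrite ?add0r // IH addrA. Qed.

Lemma path_weight_rcons x p z :
  path_weight w x (rcons p z) = path_weight w x p + w (last x p) z.
Proof. by rewrite -cats1 path_weight_cat /= addr0. Qed.

Variable t : rel N.

Lemma path_weight_ge0 x p : (forall a b, t a b -> 0 <= w a b) ->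
  path t x p -> 0 <= path_weight w x p.
Proof.
move=> w_ge0; elim: p x => [|y p IH] x //= /andP [txy pp].
by rewrite addr_ge0 ?w_ge0 ?IH.
Qed.

Lemma path_weight_rev x p : (forall a b, t a b -> w a b = w b a) -> path t x p ->
  path_weight w (last x p) (rev (belast x p)) = path_weight w x p.
Proof.
move=> w_sym; elim: p x => [|y p IH] x //= /andP [txy pp].
by rewrite rev_cons path_weight_rcons IH // last_rev_belast -(w_sym _ _ txy) addrC.
Qed.

End PathWeight.

Section TreeDistance.

Variables (N : finType) (t : rel N) (w : N -> N -> rat).

Lemma simple_path_rev x p y : symmetric t ->
  simple_path t x p y -> simple_path t y (rev (belast x p)) x.
Proof.
move=> t_sym /andP [/andP [pp up] /eqP <-].
apply/andP; split; last by rewrite last_rev_belast.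
rewrite rev_path (sub_path _ pp) => [|a b]; last by rewrite t_sym.
by rewrite -rev_rcons -lastI rev_uniq.
Qed.

Lemma simple_path_cons z x p y : t z x -> z \notin x :: p ->
  simple_path t x p y -> simple_path t z (x :: p) y.
Proof.
move=> tzx zp /andP [/andP [pp up] ly].
by apply/andP; split => //; apply/andP; split; apply/andP.
Qed.

Lemma simple_path_rcons x p y z : t y z -> z \notin x :: p ->
  simple_path t x p y -> simple_path t x (rcons p z) z.
Proof.
move=> tyz zp /andP [/andP [pp up] /eqP ly].
rewrite /simple_path rcons_path pp ly tyz -rcons_cons rcons_uniq zp up.
by rewrite last_rcons eqxx.
Qed.

Hypothesis t_tree : is_tree t.

Lemma tree_distE u p v r : simple_path t u p v ->
  tree_dist t w u v r <-> r = path_weight w u p.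
Proof.
move=> sp; have [_ [_ /(_ u v) [p0 [_ p0_uniq]]]] := t_tree.
split; last by move=> ->; exists p.
by move=> [p' [sp' <-]]; rewrite -(p0_uniq _ sp) (p0_uniq _ sp').
Qed.

Lemma tree_dist_sym u v r : (forall a b, t a b -> w a b = w b a) ->
  tree_dist t w u v r -> tree_dist t w v u r.
Proof.
move=> w_sym [p [sp <-]]; have [t_sym _] := t_tree.
exists (rev (belast u p)); split; first exact: simple_path_rev.
by move: sp => /andP [/andP [pp _] /eqP <-]; exact: path_weight_rev w_sym pp.
Qed.

End TreeDistance.

Section Spine.

Variables (N : finType) (t : rel N) (w : N -> N -> rat) (sp : seq N).
Hypotheses (sp_sorted : sorted t sp) (sp_uniq : uniq sp).

Definition spine_pos (y : N) : rat :=
  if sp is x :: s then path_weight w x (take (index y sp) s) else 0.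

Lemma spine_segment yu yv : yu \in sp -> yv \in sp -> (index yu sp <= index yv sp)%N ->
  exists2 L, simple_path t yu L yv /\ {subset L <= sp} &
    spine_pos yv - spine_pos yu = path_weight w yu L.
Proof.
rewrite /spine_pos; case: sp sp_sorted sp_uniq => [|x s] s_path s_uniq yus //.
move=> yvs le_uv.
set iu := index yu _ in le_uv *; set iv := index yv _ in le_uv *.
have last_u : last x (take iu s) = yu by rewrite -[RHS](last_take_index x yus).
have last_v : last x (take iv s) = yv by rewrite -[RHS](last_take_index x yvs).
set L := drop iu (take iv s).
have split_v : take iv s = take iu s ++ L.
  by rewrite -[LHS](cat_take_drop iu) take_takel.
have path_v : path t x (take iv s) := take_sorted iv.+1 s_path.
have uniq_v : uniq (x :: take iv s) := take_uniq iv.+1 s_uniq.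
move: path_v uniq_v; rewrite split_v cat_path -cat_cons cat_uniq last_u => /andP [_ pL].
move=> /and3P [_ /hasPn yuL uL].
exists L; first split.
- have last_L : last yu L = yv by rewrite -last_u -last_cat -split_v.
  rewrite /simple_path pL last_L /= uL eqxx !andbT.
  have yu_pre : yu \in x :: take iu s by rewrite -last_u mem_last.
  by apply/negP => /yuL; rewrite yu_pre.
- by move=> z /mem_drop /mem_take zs; rewrite inE zs orbT.
by rewrite path_weight_cat last_u addrC addKr.
Qed.

Definition hangs_at (u y : N) (a : rat) : Prop :=
  (u \in sp /\ y = u /\ a = 0) \/ (u \notin sp /\ y \in sp /\ t u y /\ a = w u y).

Lemma hangs_at_spine u y a : hangs_at u y a -> y \in sp.
Proof. by case=> [[? [-> _]] | [_ []]]. Qed.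

Hypotheses (t_tree : is_tree t) (w_sym : forall a b, t a b -> w a b = w b a).

Lemma hanging_dist_ordered u v yu yv au av r :
  hangs_at u yu au -> hangs_at v yv av -> u != v -> (index yu sp <= index yv sp)%N ->
  tree_dist t w u v r <-> r = au + av + (spine_pos yv - spine_pos yu).
Proof.
move=> Hu Hv uv le_uv; have [t_sym _] := t_tree.
have [L [pL Lsp] ->] := spine_segment (hangs_at_spine Hu) (hangs_at_spine Hv) le_uv.
have [Q [pQ Qsp wQ]] : exists Q, [/\ simple_path t u Q yv, {subset Q <= sp} &
    path_weight w u Q = au + path_weight w yu L].
  case: Hu => [[_ [eu ->]] | [usp [yusp [tu ->]]]].
    by subst yu; exists L; rewrite add0r.
  exists (yu :: L); split => //=.
  - apply: simple_path_cons => //; rewrite inE negb_or.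
    by rewrite (contraNneq _ usp) ?(contra (@Lsp u)) // => ->.
  - by move=> z; rewrite inE => /orP [/eqP -> | /Lsp].
have [R [pR wR]] : exists R, simple_path t u R v /\
    path_weight w u R = au + av + path_weight w yu L.
  case: Hv => [[_ [ev ->]] | [vsp [_ [tv ->]]]].
    by subst yv; exists Q; rewrite wQ addr0.
  exists (rcons Q v); split.
    apply: simple_path_rcons pQ; first by rewrite t_sym.
    by rewrite inE negb_or eq_sym uv; apply: contra vsp => /Qsp.
  have [_ /eqP lQ] := andP pQ.
  by rewrite path_weight_rcons wQ lQ -(w_sym tv) addrAC.
by rewrite (tree_distE w t_tree _ pR) wR.
Qed.

Hypothesis w_ge0 : forall a b, t a b -> 0 <= w a b.

Lemma hanging_dist u v yu yv au av r :
  hangs_at u yu au -> hangs_at v yv av -> u != v ->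
  tree_dist t w u v r <-> r = au + av + `|spine_pos yu - spine_pos yv|.
Proof.
move=> Hu Hv uv; have [yusp yvsp] := (hangs_at_spine Hu, hangs_at_spine Hv).
have pos_gap y y' : y \in sp -> y' \in sp -> (index y sp <= index y' sp)%N ->
    spine_pos y <= spine_pos y'.
  move=> ys ys' le; have [L [/andP [/andP [pL _] _] _] E] := spine_segment ys ys' le.
  by rewrite -subr_ge0 E (path_weight_ge0 w_ge0 pL).
case: (leqP (index yu sp) (index yv sp)) => le_uv.
  by rewrite distrC ger0_norm ?subr_ge0 ?pos_gap //; apply: hanging_dist_ordered.
rewrite ger0_norm ?subr_ge0 ?pos_gap 1?ltnW // (addrC au).
have vu : v != u by rewrite eq_sym.
have /(_ r) dist_vu := hanging_dist_ordered _ Hv Hu vu (ltnW le_uv).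
split; first by move/(tree_dist_sym t_tree w_sym)/dist_vu.
by move/dist_vu; apply: tree_dist_sym.
Qed.

End Spine.

Lemma degree_ge2 (N : finType) (t : rel N) y a b :
  t y a -> t y b -> a != b -> (2 <= degree t y)%N.
Proof.
move=> ya yb ab; apply: leq_trans (subset_leq_card (_ : [set a; b] \subset _)).
  by rewrite cards2 ab.
by apply/subsetP => z; rewrite !inE => /orP [] /eqP ->.
Qed.

Lemma hangs_at_exists (N : finType) (t : rel N) (w : N -> N -> rat) (sp : seq N) u :
  is_tree t -> (forall x, (2 <= degree t x)%N -> x \in sp) -> sp != [::] ->
  exists y a, hangs_at t w sp u y a.
Proof.
move=> [t_sym [_ t_paths]] sp_deg; case: sp sp_deg => [//|z s] sp_deg _.
case usp: (u \in z :: s); first by exists u, 0; left.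
have [[|y p] [/andP [/andP [/= pp up] /eqP lp] _]] := t_paths u z.
  by rewrite -lp mem_head in usp.
case ysp: (y \in z :: s); first by exists y, (w u y); right; case/andP: pp; rewrite usp ysp.
move: pp up lp; case: p => [|y' p] /= /andP [tuy pp] up lp.
  by rewrite lp mem_head in ysp.
(* Otherwise the first step [y] towards the spine has two neighbours on this
   path, hence degree at least 2, hence lies on the spine after all. *)
suff /sp_deg : (2 <= degree t y)%N by rewrite ysp.
apply: (degree_ge2 (a := u) (b := y')); first by rewrite t_sym.
  by case/andP: pp.
by move: up; rewrite !inE !negb_or => /and3P [/and3P [_ ? _] _ _].
Qed.

(** * Blue-red interval graphs *)

Section CenteredIntervals.

Variable R : realFieldType.

Lemma itv_meetE (c1 r1 c2 r2 : R) : 0 <= r1 -> 0 <= r2 ->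
  (exists x, c1 - r1 <= x <= c1 + r1 /\ c2 - r2 <= x <= c2 + r2) <->
  `|c1 - c2| <= r1 + r2.
Proof.
move=> r1_ge0 r2_ge0; rewrite ler_norml; split.
  by move=> [x [/andP [? ?] /andP [? ?]]]; apply/andP; split; lra.
move=> /andP [? ?]; case: (lerP (c1 - r1) (c2 - r2)) => ?.
  by exists (c2 - r2); split; apply/andP; split; lra.
by exists (c1 - r1); split; apply/andP; split; lra.
Qed.

Lemma itv_subE (c1 r1 c2 r2 : R) : 0 <= r1 ->
  (forall x, c1 - r1 <= x <= c1 + r1 -> c2 - r2 <= x <= c2 + r2) <->
  `|c1 - c2| <= r2 - r1.
Proof.
move=> r1_ge0; rewrite ler_norml; split => [sub | /andP [? ?] x /andP [? ?]].
  have /andP [? ?] : c2 - r2 <= c1 - r1 <= c2 + r2 by apply: sub; apply/andP; split; lra.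
  have /andP [? ?] : c2 - r2 <= c1 + r1 <= c2 + r2 by apply: sub; apply/andP; split; lra.
  by apply/andP; split; lra.
by apply/andP; split; lra.
Qed.

End CenteredIntervals.

Definition centered_adj (V : finType) (B : {set V}) (c rad : V -> rat) (u v : V) : bool :=
  if u \in B then
    if v \in B then `|c u - c v| <= rad u + rad v else `|c u - c v| <= rad u - rad v
  else (v \in B) && (`|c u - c v| <= rad v - rad u).

Lemma blue_red_adjE (V : finType) (B : {set V}) (lo hi : V -> rat) (u v : V) :
  lo u <= hi u -> lo v <= hi v -> u != v ->
  ( (u \in B /\ v \in B /\ u != v /\ exists x, lo u <= x <= hi u /\ lo v <= x <= hi v)
  \/ (u \notin B /\ v \in B /\ forall x, lo u <= x <= hi u -> lo v <= x <= hi v)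
  \/ (u \in B /\ v \notin B /\ forall x, lo v <= x <= hi v -> lo u <= x <= hi u) )
  <-> centered_adj B (fun z => (lo z + hi z) / 2) (fun z => (hi z - lo z) / 2) u v.
Proof.
move=> le_u le_v uv.
pose c z := (lo z + hi z) / 2; pose rad z := (hi z - lo z) / 2.
rewrite -/c -/rad /centered_adj.
have rad_ge0 z : lo z <= hi z -> 0 <= rad z by rewrite /rad; lra.
have loE z : lo z = c z - rad z by rewrite /c /rad; field.
have hiE z : hi z = c z + rad z by rewrite /c /rad; field.
rewrite !loE !hiE.
have meet := @itv_meetE _ (c u) (rad u) (c v) (rad v) (rad_ge0 u le_u) (rad_ge0 v le_v).
have sub_uv := @itv_subE _ (c u) (rad u) (c v) (rad v) (rad_ge0 u le_u).
have sub_vu := @itv_subE _ (c v) (rad v) (c u) (rad u) (rad_ge0 v le_v).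
rewrite [`|c v - c u|]distrC in sub_vu.
case: (u \in B); case: (v \in B) => /=.
- split=> [[[_ [_ [_ /meet]]] | [[//] | [_ [//]]]] // | /meet]; by left.
- split=> [[[_ [//]] | [[//] | [_ [_ /sub_vu]]]] // | /sub_vu]; by right; right.
- split=> [[[//] | [[_ [_ /sub_uv]] | [//]]] // | /sub_uv]; by right; left.
by split=> [[[//] | [[_ [//]] | [//]]] |].
Qed.

Definition caterpillar_model (V : finType) (e : rel V) (A Y : V -> rat) : Prop :=
  forall u v, u != v -> (e u v <-> A u + A v + `|Y u - Y v| <= 1).

Lemma caterpillar_model_blue_red (V : finType) (e : rel V) (A Y : V -> rat) :
  irreflexive e -> caterpillar_model e A Y -> blue_red_interval e.
Proof.
move=> e_irr model; pose rad v := `|A v - 1/2|.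
have rad_ge0 v : 0 <= rad v by exact: normr_ge0.
exists [set v | A v <= 1/2], (fun v => Y v - rad v), (fun v => Y v + rad v).
split=> [v | u v]; first by have := rad_ge0 v; lra.
have [<- | uv] : u = v \/ u != v by case: (eqVneq u v); [left | right].
  by rewrite e_irr; split=> // -[[_ [_ [/eqP]]] | [[/negP nB [B _]] | [B [/negP nB _]]]].
have le_rad z : Y z - rad z <= Y z + rad z by have := rad_ge0 z; lra.
have := @blue_red_adjE _ [set v | A v <= 1/2] (fun z => Y z - rad z) (fun z => Y z + rad z).
move=> /(_ u v (le_rad u) (le_rad v) uv) adjE.
apply: (iff_trans _ (iff_sym adjE)).
rewrite model //.
have cE z : (Y z - rad z + (Y z + rad z)) / 2 = Y z by field.
have radE z : (Y z + rad z - (Y z - rad z)) / 2 = rad z by field.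
rewrite /centered_adj !cE !radE !inE /rad.
have := normr_ge0 (Y u - Y v).
by case: (lerP (A u) _); case: (lerP (A v) _) => /= *; split=> // ?; lra.
Qed.

Lemma exists_pos_lower_bound (T : finType) (R : realDomainType) (g : T -> R) :
  exists d, [/\ 0 < d, d <= 1 & forall x, 0 < g x -> d <= g x].
Proof.
exists (\big[Order.min/1]_(x | 0 < g x) g x); split.
- exact: lt_bigmin.
- exact: bigmin_le_id.
- by move=> x; apply: bigmin_le_cond.
Qed.

Lemma exists_small_scale (T : finType) (R : realFieldType) (f : T -> R) :
  exists2 s : R, 0 < s & forall x, s * `|f x| <= 1/4 - s.
Proof.
pose M := 1 + \sum_x `|f x|.
have M_bound x : `|f x| <= M - 1.
  have -> : M - 1 = \sum_x `|f x| by rewrite /M addrC addKr.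
  by rewrite (bigD1 x) //= lerDl sumr_ge0.
have M_ge1 : 1 <= M by rewrite /M lerDl sumr_ge0.
have M_gt0 : 0 < M by lra.
exists (4 * M)^-1 => [|x]; first by rewrite invr_gt0; lra.
have -> : 1/4 = (4 * M)^-1 * M by field; lra.
rewrite -[X in _ - X]mulr1 -mulrBr; apply: ler_wpM2l (M_bound x).
by rewrite invr_ge0; lra.
Qed.

Lemma blue_red_interval_model (V : finType) (e : rel V) : blue_red_interval e ->
  exists A Y : V -> rat, [/\ forall v, 0 <= A v <= 1, forall u v, `|Y u - Y v| <= 1 &
    caterpillar_model e A Y].
Proof.
move=> [B [lo [hi [lo_hi adj]]]].
pose c v := (lo v + hi v) / 2; pose rad v := (hi v - lo v) / 2.
have rad_ge0 v : 0 <= rad v by have := lo_hi v; rewrite /rad; lra.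
have [d [d_gt0 d_le1 d_gap]] :=
  exists_pos_lower_bound (fun p : V * V => `|c p.1 - c p.2| - rad p.1 - rad p.2).
have [s s_gt0 s_small] := exists_small_scale (fun v => `|c v| + rad v).
have {}s_small v : s * `|c v| + s * rad v <= 1/4 - s.
  by have := s_small v; rewrite /= ger0_norm ?addr_ge0 // mulrDr.
(* The shift d/4 makes two red vertices never adjacent, and is too small to
   separate two blue intervals since positive gaps are at least d. *)
pose ex v := if v \in B then - (rad v + d / 4) else rad v + d / 4.
exists (fun v => 1/2 + s * ex v), (fun v => s * c v); split.
- move=> v; have := s_small v; have := normr_ge0 (c v); have := rad_ge0 v.
  have := ler_wpM2l (ltW s_gt0) d_le1.
  by rewrite /ex; case: (v \in B) => * /=; apply/andP; split; nra.
- move=> u v; rewrite -mulrBr normrM gtr0_norm //.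
  have := ler_wpM2l (ltW s_gt0) (ler_normB (c u) (c v)); rewrite mulrDr.
  have := s_small u; have := s_small v.
  have := mulr_ge0 (ltW s_gt0) (rad_ge0 u); have := mulr_ge0 (ltW s_gt0) (rad_ge0 v); lra.
move=> u v uv; rewrite adj; apply: iff_trans (blue_red_adjE B (lo_hi u) (lo_hi v) uv) _.
rewrite -/c -/rad /centered_adj; symmetry.
rewrite -subr_le0 -mulrBr normrM gtr0_norm //.
have -> : 1/2 + s * ex u + (1/2 + s * ex v) + s * `|c u - c v| - 1 =
    s * (ex u + ex v + `|c u - c v|) by field.
rewrite pmulr_rle0 // /ex; have := normr_ge0 (c u - c v).
have := rad_ge0 u; have := rad_ge0 v.
have /= gap_uv := d_gap (u, v).
by case: (u \in B); case: (v \in B) => /= *; split=> // ?; lra.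
Qed.

(** * From caterpillar leaf roots and back *)

Lemma linear_leaf_power_model (V : finType) (e : rel V) :
  linear_leaf_power e -> exists A Y : V -> rat, caterpillar_model e A Y.
Proof.
move=> [N [t [w [f [[t_tree [sp0 [sp0_path sp0_deg]]] [_ [w_prop [f_inj [_ dist]]]]]]]]].
case: (pickP (@predT V)) => [v0 _ | V0]; last first.
  by exists (fun _ => 0), (fun _ => 0) => u; have := V0 u.
have [sp [sp_sorted sp_uniq sp_deg sp_ne]] : exists sp, [/\ sorted t sp, uniq sp,
    forall x, (2 <= degree t x)%N -> x \in sp & sp != [::]].
  case: sp0 sp0_path sp0_deg => [|x s] sp0_path sp0_deg.
    by exists [:: f v0]; split => // z /sp0_deg.
  by exists (x :: s); case/andP: sp0_path.
have w_sym a b : t a b -> w a b = w b a by case/w_prop.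
have w_ge0 a b : t a b -> 0 <= w a b by case/w_prop => /andP [].
have /fin_all_exists [g hang] v : exists ya : N * rat, hangs_at t w sp (f v) ya.1 ya.2.
  by have [y [a ?]] := hangs_at_exists w (f v) t_tree sp_deg sp_ne; exists (y, a).
exists (fun v => (g v).2), (fun v => spine_pos w sp (g v).1) => u v uv.
have fuv : f u != f v by rewrite (inj_eq f_inj).
have distE r := hanging_dist sp_sorted sp_uniq t_tree w_sym w_ge0 r (hang u) (hang v) fuv.
rewrite dist //; split => [[r [/distE -> //]] | le1].
by eexists; split; [apply/distE | exact: le1].
Qed.

Lemma trivial_linear_leaf_power (V : finType) (e : rel V) :
  (#|V| <= 1)%N -> linear_leaf_power e.
Proof.
move=> /fintype_le1P V_le1.
have deg0 x : degree (fun _ _ : V => false) x = 0%N.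
  by apply/eqP; rewrite cards_eq0; apply/eqP/setP => y; rewrite !inE.
have tr : is_tree (fun _ _ : V => false).
  split => //; split => // x y; exists [::]; split; first by rewrite /simple_path /= (V_le1 x y).
  by case=> [|b q] // /andP [/andP []].
exists V, (fun _ _ => false), (fun _ _ => 0), id; split.
  by split => //; exists [::]; split => // x; rewrite deg0.
split => //; split => //; split => //; split.
  by move=> x; rewrite /is_leaf deg0; split => // _; exists x.
by move=> u v; rewrite (V_le1 u v) eqxx.
Qed.

Section CaterpillarOfOrder.

Variables (V : finType) (ss : seq V).
Hypotheses (ss_uniq : uniq ss) (ss_all : forall v, v \in ss) (ss_size : (1 < size ss)%N).

Definition spine_parent (z : V + V) : V + V :=
  match z with
  | inl v => inr v
  | inr v => inr (nth v ss (index v ss).-1)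
  end.

Definition caterpillar_rel : rel (V + V) := parent_rel spine_parent.

Definition spine_rank (z : V + V) : nat := if z is inr v then index v ss else size ss.

Let index_lt v : (index v ss < size ss)%N.
Proof. by rewrite index_mem. Qed.

Lemma spine_parent_rank z :
  spine_parent z = z \/ (spine_rank (spine_parent z) < spine_rank z)%N.
Proof.
case: z => v /=; first by right.
case E: (index v ss) => [|i] /=; first by left; rewrite -E nth_index.
by right; rewrite /= index_uniq // ltnW // -E.
Qed.

Lemma caterpillar_tree : is_tree caterpillar_rel.
Proof.
have [v0 _] : exists v0 : V, true by case: (ss) ss_size => [|x s] //; exists x.
apply: (parent_tree spine_parent_rank (r := inr (nth v0 ss 0))).
have down k : (k < size ss)%N ->
    iter k spine_parent (inr (nth v0 ss k)) = inr (nth v0 ss 0).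
  elim: k => [//|k IH] lt_k; rewrite iterSr /= index_uniq //= (set_nth_default v0) ?IH //; lia.
case=> v; [exists (index v ss).+1; rewrite iterSr | exists (index v ss)];
  by rewrite -{2}(nth_index v0 (ss_all v)) down.
Qed.

Lemma caterpillar_rel_inl v z : caterpillar_rel (inl v) z = (z == inr v).
Proof. by case: z => u; rewrite /caterpillar_rel /parent_rel -!sum_eqE /= ?andbF ?orbF // eq_sym. Qed.

Lemma degree_pendant v : degree caterpillar_rel (inl v) = 1%N.
Proof.
rewrite /degree (_ : [set y | _] = [set inr v]) ?cards1 //.
by apply/setP => z; rewrite !inE caterpillar_rel_inl.
Qed.

Lemma caterpillar_rel_spine x0 i : (i.+1 < size ss)%N ->
  caterpillar_rel (inr (nth x0 ss i)) (inr (nth x0 ss i.+1)).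
Proof.
move=> lt_i; have lt_i' : (i < size ss)%N by rewrite ltnW.
have par_next : spine_parent (inr (nth x0 ss i.+1)) = inr (nth x0 ss i).
  by rewrite /= index_uniq // (set_nth_default x0).
rewrite /caterpillar_rel /parent_rel par_next eqxx orbT andbT.
by apply/eqP => -[/eqP]; rewrite nth_uniq // eqn_leq ltnn andbF.
Qed.

Lemma degree_spine v : (2 <= degree caterpillar_rel (inr v))%N.
Proof.
have [x0 _] : exists x0 : V, true by exists v.
have pendant : caterpillar_rel (inr v) (inl v).
  by rewrite /caterpillar_rel parent_rel_sym -/caterpillar_rel caterpillar_rel_inl.
have v_nth : nth x0 ss (index v ss) = v by rewrite nth_index.
case E: (index v ss) v_nth => [|i] v_nth.
  have := caterpillar_rel_spine x0 ss_size; rewrite v_nth => next.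
  by apply: degree_ge2 pendant next _; rewrite -sum_eqE.
have : (i.+1 < size ss)%N by rewrite -E index_lt.
move=> /(caterpillar_rel_spine x0); rewrite v_nth /caterpillar_rel parent_rel_sym => prev.
by apply: degree_ge2 pendant prev _; rewrite -sum_eqE.
Qed.

Lemma caterpillar_spine_sorted : sorted caterpillar_rel (map inr ss).
Proof.
have [x0 _] : exists x0 : V, true by case: (ss) ss_size => [|x s] //; exists x.
apply/(sortedP (inr x0)) => i; rewrite size_map => lt_i.
by rewrite !(nth_map x0) ?(ltnW lt_i) //; apply: caterpillar_rel_spine.
Qed.

Lemma caterpillar_spine_uniq : uniq (map (@inr V V) ss).
Proof. by rewrite map_inj_uniq // => a b []. Qed.

Lemma caterpillar_is_caterpillar : is_caterpillar caterpillar_rel.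
Proof.
split; first exact: caterpillar_tree.
exists (map inr ss); split.
  by case: (map inr ss) caterpillar_spine_sorted caterpillar_spine_uniq => //= z s -> ->.
by case=> v; rewrite ?degree_pendant // => _; apply: map_f.
Qed.

Lemma caterpillar_leafP z : is_leaf caterpillar_rel z <-> exists v, inl v = z.
Proof.
rewrite /is_leaf; case: z => v; first by rewrite degree_pendant; split=> //; exists v.
by rewrite leqNgt degree_spine; split=> // -[].
Qed.

Lemma caterpillar_hangs_at (w : V + V -> V + V -> rat) u :
  hangs_at caterpillar_rel w (map inr ss) (inl u) (inr u) (w (inl u) (inr u)).
Proof.
right; split; first by apply/mapP => -[].
by rewrite map_f // caterpillar_rel_inl eqxx.
Qed.

End CaterpillarOfOrder.

Section CaterpillarFromModel.

Variables (V : finType) (A Y : V -> rat).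

Definition model_weight (x y : V + V) : rat :=
  match x, y with
  | inl u, inr _ | inr _, inl u => A u
  | inr a, inr b => `|Y a - Y b|
  | inl _, inl _ => 0
  end.

Let Yle := fun u v => Y u <= Y v.

Lemma path_weight_spine x L : path Yle x L ->
  path_weight model_weight (inr x) (map inr L) = Y (last x L) - Y x.
Proof.
elim: L x => [|y L IH] x /=; first by rewrite subrr.
move=> /andP [le_xy pL]; rewrite IH // distrC ger0_norm ?subr_ge0 //.
by rewrite addrC addrA subrK.
Qed.

Lemma spine_pos_sorted x s v : sorted Yle (x :: s) -> v \in x :: s ->
  spine_pos model_weight (map inr (x :: s)) (inr v) = Y v - Y x.
Proof.
move=> s_sorted vs; rewrite /spine_pos index_map; last by move=> a b [].
have := last_take_index x vs; have := take_sorted (index v (x :: s)).+1 s_sorted.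
set i := index v (x :: s) => /= pre_sorted last_pre.
by rewrite -map_take path_weight_spine // last_pre.
Qed.

Lemma caterpillar_model_linear_leaf_power (e : rel V) :
  (forall v, 0 <= A v <= 1) -> (forall u v, `|Y u - Y v| <= 1) ->
  caterpillar_model e A Y -> linear_leaf_power e.
Proof.
move=> A01 Y1 model.
have [/trivial_linear_leaf_power // | V_gt1] := leqP #|V| 1.
have ss_sorted : sorted Yle (sort Yle (enum V)).
  by apply: sort_sorted => u v; apply: le_total.
have ss_uniq : uniq (sort Yle (enum V)) by rewrite sort_uniq enum_uniq.
have ss_all v : v \in sort Yle (enum V) by rewrite mem_sort mem_enum.
have ss_size : (1 < size (sort Yle (enum V)))%N by rewrite size_sort -cardE.
case: (sort Yle (enum V)) ss_sorted ss_uniq ss_all ss_size => [//|x s] ss_sorted.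
move=> ss_uniq ss_all ss_size; pose t := caterpillar_rel (x :: s).
have t_tree : is_tree t := caterpillar_tree ss_uniq ss_all ss_size.
have w01 a b : t a b -> 0 <= model_weight a b <= 1.
  by case: a b => [a|a] [b|b] //= _; rewrite normr_ge0 Y1.
have w_ge0 a b : t a b -> 0 <= model_weight a b by case/w01/andP.
have w_sym a b : t a b -> model_weight a b = model_weight b a.
  by case: a b => [a|a] [b|b] //= _; rewrite distrC.
exists (V + V)%type, t, model_weight, inl; split.
  exact: caterpillar_is_caterpillar.
split=> //; split=> [a b tab | ]; first by split; [exact: w01 | exact: w_sym].
split=> [a b [] // | ]; split=> [z | u v uv]; first exact: caterpillar_leafP.
have uv' : inl u != inl v :> V + V by [].
have distE r : tree_dist t model_weight (inl u) (inl v) r <-> r = A u + A v + `|Y u - Y v|.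
  rewrite (hanging_dist (caterpillar_spine_sorted ss_uniq ss_size)
    (caterpillar_spine_uniq ss_uniq) t_tree w_sym w_ge0 r
    (caterpillar_hangs_at ss_all _ u) (caterpillar_hangs_at ss_all _ v) uv').
  by rewrite !spine_pos_sorted // opprB addrA subrK.
rewrite model //; split=> [le1 | [r [/distE -> //]]].
by eexists; split; [apply/distE | exact: le1].
Qed.

End CaterpillarFromModel.

Theorem theorem1 (V : finType) (e : rel V) :
  simple_graph e -> (blue_red_interval e <-> linear_leaf_power e).
Proof.
move=> [_ e_irr]; split.
  move=> /blue_red_interval_model [A [Y [A01 Y1 model]]].
  exact: caterpillar_model_linear_leaf_power A01 Y1 model.
move=> /linear_leaf_power_model [A [Y model]].
exact: caterpillar_model_blue_red e_irr model.
Qed.
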